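(* Let $L \ge 1$ and let $\mathcal{N} = \mathcal{N}(0, I_L)$ denote the $L$-dimensional standard Gaussian distribution. Let $\mathsf{Adv}$ be a class of distinguishers (e.g. all probabilistic polynomial-time adversaries) and let $\varepsilon \ge 0$, $t \ge 1$. Let $\mathcal{W}$ be a latent watermarking scheme, viewed as a distribution on $\mathbb{R}^L$ from which watermarked initial latents $Z \leftarrow \mathcal{W}$ are sampled. Let $\mathcal{W}^{\mathrm{sem}}$ be its SemBind variant: it samples $Z \leftarrow \mathcal{W}$, independently samples randomness determining a sign mask $S \in \{-1,+1\}^L$ and a permutation $\pi$ of $\{1,\dots,L\}$, and outputs $Z^{\mathrm{sem}} = F_{S,\pi}(Z) := P_\pi \,\mathrm{Diag}(S)\, Z$, where $P_\pi$ is the permutation matrix of $\pi$. In the multi-sample setting, the $t$ outputs are $F_{S_i,\pi_i}(Z_i)$, $i=1,\dots,t$, where $Z_1,\dots,Z_t$ are i.i.d. from $\mathcal{W}$ and the pairs $\{(S_i,\pi_i)\}_{i=1}^t$ (which may be arbitrarily correlated or shared across $i$, and may force some entries of $S_i$ to $+1$) are jointly independent of $\{Z_i\}_{i=1}^t$. Then: (1) If $\mathcal{W}$ is single-sample $(\varepsilon,\mathsf{Adv})$-undetectable, then $\mathcal{W}^{\mathrm{sem}}$ is single-sample $(\varepsilon,\mathsf{Adv})$-undetectable. (2) If $\mathcal{W}$ is multi-sample $(t,\varepsilon,\mathsf{Adv})$-undetectable, then $\mathcal{W}^{\mathrm{sem}}$ is multi-sample $(t,\varepsilon,\mathsf{A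dv})$-undetectable.
   Context: Single-sample undetectability: a scheme producing a random vector $Z \in \mathbb{R}^L$ is single-sample $(\varepsilon,\mathsf{Adv})$-undetectable if for every distinguisher $D \in \mathsf{Adv}$, $\bigl|\Pr[D(Z)=1] - \Pr[D(G)=1]\bigr| \le \varepsilon$, where $Z$ is drawn from the scheme and $G \leftarrow \mathcal{N}(0,I_L)$. Multi-sample undetectability: the scheme is multi-sample $(t,\varepsilon,\mathsf{Adv})$-undetectable if for every $D \in \mathsf{Adv}$, $\bigl|\Pr[D(Z_1,\dots,Z_t)=1] - \Pr[D(G_1,\dots,G_t)=1]\bigr| \le \varepsilon$, where $Z_1,\dots,Z_t$ are i.i.d. outputs of the scheme and $G_1,\dots,G_t$ are i.i.d. $\mathcal{N}(0,I_L)$. For the SemBind variant, the relevant outputs are the transformed latents $F_{S,\pi}(Z)$ (resp. $(F_{S_i,\pi_i}(Z_i))_{i=1}^t$), compared against i.i.d. standard Gaussians in the same way. *)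

From HB Require Import structures.
From mathcomp Require Import all_boot all_order all_algebra all_fingroup.
From mathcomp Require Import all_classical all_reals all_analysis.
Set Implicit Arguments. Unset Strict Implicit. Unset Printing Implicit Defensive.
Import Order.TTheory GRing.Theory Num.Theory.
Local Open Scope classical_set_scope.
Local Open Scope ring_scope.

Definition iid_law {d} {T : measurableType d} {R : realType} (n : nat)
    (mu : set T -> \bar R)
    (P : probability (n.-tuple T) R) : Prop :=
  forall B : 'I_n -> set T, (forall i, measurable (B i)) ->
    P [set x | forall i, B i (tnth x i)] = (\prod_(i < n) mu (B i))%E.

Definition std_gaussian {R : realType} (L : nat)
    (G : probability (L.-tuple R) R) : Prop :=
  iid_law (fun A : set R => normal_prob (0 : R) 1 A) G.

(* A (possibly randomised) distinguisher on inputs of type T is represented by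
   its acceptance probability x |-> Pr[D(x) = 1], a measurable [0,1]-valued
   function; Pr[D(X)=1] is then the expectation of this function. *)
Definition distinguisher {d} {T : measurableType d} {R : realType}
    (D : T -> R) : Prop :=
  measurable_fun setT D /\ forall x, 0 <= D x <= 1.

Definition accept {d} {T : measurableType d} {R : realType}
    (P : probability T R) (D : T -> R) : R :=
  Rintegral P setT D.

Definition single_undetectable {R : realType} (L : nat)
    (W : probability (L.-tuple R) R) (eps : R)
    (Adv : set (L.-tuple R -> R)) : Prop :=
  forall G : probability (L.-tuple R) R, std_gaussian G ->
  forall D, Adv D -> `| accept W D - accept G D | <= eps.

Definition multi_undetectable {R : realType} (L t : nat)
    (W : probability (L.-tuple R) R) (eps : R)
    (Adv : set (t.-tuple (L.-tuple R) -> R)) : Prop :=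
  forall (G : probability (L.-tuple R) R)
         (PW PG : probability (t.-tuple (L.-tuple R)) R),
  std_gaussian G -> iid_law W PW -> iid_law G PG ->
  forall D, Adv D -> `| accept PW D - accept PG D | <= eps.

(* A sign mask S in {-1,+1}^L is encoded as s : {ffun 'I_L -> bool},
   with S_i = -1 iff s i = true. *)
Definition sgn {R : realType} (b : bool) : R := if b then -1 else 1.

Definition sem_key (L : nat) := ({ffun 'I_L -> bool} * {perm 'I_L})%type.

(* F_{S,pi}(z) = P_pi Diag(S) z, with P_pi e_i = e_{pi i}, i.e.
   (F z)_j = S_{pi^-1 j} * z_{pi^-1 j}. *)
Definition semF {R : realType} (L : nat) (k : sem_key L)
    (z : L.-tuple R) : L.-tuple R :=
  [tuple sgn (k.1 ((k.2)^-1%g j)) * tnth z ((k.2)^-1%g j) | j < L].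

Definition fin_distr {R : realType} (K : finType) (mu : K -> R) : Prop :=
  (forall k, 0 <= mu k) /\ \sum_(k : K) mu k = 1.

Definition accept_sem1 {R : realType} (L : nat)
    (W : probability (L.-tuple R) R) (mu : sem_key L -> R)
    (D : L.-tuple R -> R) : R :=
  \sum_(k : sem_key L) mu k * accept W (fun z => D (semF k z)).

(* Pr[D((F_{S_i,pi_i}(Z_i))_i) = 1] where (Z_i)_i ~ PW and the (arbitrarily
   correlated) keys ((S_i,pi_i))_i ~ mu, independently of (Z_i)_i. *)
Definition semF_t {R : realType} (L t : nat) (ks : {ffun 'I_t -> sem_key L})
    (zs : t.-tuple (L.-tuple R)) : t.-tuple (L.-tuple R) :=
  [tuple semF (ks i) (tnth zs i) | i < t].

Definition accept_semt {R : realType} (L t : nat)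
    (PW : probability (t.-tuple (L.-tuple R)) R)
    (mu : {ffun 'I_t -> sem_key L} -> R)
    (D : t.-tuple (L.-tuple R) -> R) : R :=
  \sum_(ks : {ffun 'I_t -> sem_key L}) mu ks * accept PW (fun zs => D (semF_t ks zs)).

Definition single_undetectable_sem {R : realType} (L : nat)
    (W : probability (L.-tuple R) R) (mu : sem_key L -> R) (eps : R)
    (Adv : set (L.-tuple R -> R)) : Prop :=
  forall G : probability (L.-tuple R) R, std_gaussian G ->
  forall D, Adv D -> `| accept_sem1 W mu D - accept G D | <= eps.

Definition multi_undetectable_sem {R : realType} (L t : nat)
    (W : probability (L.-tuple R) R) (mu : {ffun 'I_t -> sem_key L} -> R)
    (eps : R) (Adv : set (t.-tuple (L.-tuple R) -> R)) : Prop :=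
  forall (G : probability (L.-tuple R) R)
         (PW PG : probability (t.-tuple (L.-tuple R)) R),
  std_gaussian G -> iid_law W PW -> iid_law G PG ->
  forall D, Adv D -> `| accept_semt PW mu D - accept PG D | <= eps.

(* The reductions used by the class of adversaries: a distinguisher that
   samples the SemBind key itself and runs D on the transformed input. *)
Definition reduce1 {R : realType} (L : nat) (mu : sem_key L -> R)
    (D : L.-tuple R -> R) : L.-tuple R -> R :=
  fun z => \sum_(k : sem_key L) mu k * D (semF k z).

Definition reducet {R : realType} (L t : nat) (mu : {ffun 'I_t -> sem_key L} -> R)
    (D : t.-tuple (L.-tuple R) -> R) : t.-tuple (L.-tuple R) -> R :=
  fun zs => \sum_(ks : {ffun 'I_t -> sem_key L}) mu ks * D (semF_t ks zs).

From HB Require Import structures.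
From mathcomp Require Import all_boot all_order all_algebra all_fingroup.
From mathcomp Require Import all_classical all_reals all_analysis.
Set Implicit Arguments. Unset Strict Implicit.
Import Order.TTheory GRing.Theory Num.Theory.
Local Open Scope classical_set_scope.
Local Open Scope ring_scope.

(* The SemBind key k = (S, pi) acts on a latent by the signed coordinate
   permutation F_k, which preserves N(0, I_L) since N(0, 1) is symmetric and
   the coordinates are i.i.d.; for the same reason the blockwise keys preserve
   N(0, I_L)^t.  A distinguisher D for the SemBind variant therefore yields the
   distinguisher z |-> E_k[D (F_k z)] for the original scheme: on watermarked
   inputs it accepts exactly as often as D does on SemBind outputs, and on
   Gaussian inputs exactly as often as D does.  The advantage is unchanged, so
   undetectability transfers. *)


Definition rectangle {T : Type} {n} (B : 'I_n -> set T) : set (n.-tuple T) :=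
  [set x | forall i, B i (tnth x i)].

Definition perm_coord_map {T : Type} {n} (s : {perm 'I_n}) (g : 'I_n -> T -> T)
    (z : n.-tuple T) : n.-tuple T :=
  [tuple g j (tnth z (s j)) | j < n].

Section Rectangles.
Context d (T : measurableType d) (n : nat).

Lemma rectangle_measurable (B : 'I_n -> set T) :
  (forall i, measurable (B i)) -> measurable (rectangle B).
Proof.
move=> mB.
have -> : rectangle B = \big[setI/setT]_(i <- index_enum 'I_n) ((@tnth n T)^~ i @^-1` B i).
  rewrite -bigcap_seq; apply/seteqP; split=> x /=.
    by move=> Bx i _; exact: Bx.
  by move=> Bx i; apply: Bx; rewrite /= mem_index_enum.
apply: bigsetI_measurable => i _.
by rewrite -[X in measurable X]setTI; apply: measurable_tnth.
Qed.

Lemma measure_rectangle_unique (R : realType) (m1 m2 : {measure set (n.-tuple T) -> \bar R}) :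
  (m1 setT < +oo)%E ->
  (forall B : 'I_n -> set T, (forall i, measurable (B i)) ->
     m1 (rectangle B) = m2 (rectangle B)) ->
  forall A, measurable A -> m1 A = m2 A.
Proof.
move=> m1_fin m12.
pose G := [set A : set (n.-tuple T) |
  exists2 B : 'I_n -> set T, (forall i, measurable (B i)) & A = rectangle B].
have GT : G setT by exists (fun _ => setT) => //; apply/seteqP; split.
apply: (measure_unique G (fun _ => setT)).
- apply/seteqP; split; last first.
    apply: smallest_sub; first exact: sigma_algebra_measurable.
    by move=> A [B mB ->]; exact: rectangle_measurable.
  change (g_sigma_preimage (fun i (x : n.-tuple T) => tnth x i) `<=` <<s G >>).
  apply: smallest_sub; first exact: smallest_sigma_algebra.
  apply: (big_ind (fun S => S `<=` <<s G >>)) => //.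
    by move=> S1 S2 h1 h2; rewrite subUset.
  move=> i _ A [C mC <-]; apply: sub_sigma_algebra.
  exists (fun j => if j == i then C else setT); first by move=> j; case: eqP.
  apply/seteqP; split=> x /=.
    by move=> [_ Cx] j; case: eqP => // ->.
  by move=> Bx; split => //; have := Bx i; rewrite eqxx.
- move=> A1 A2 [B1 mB1 ->] [B2 mB2 ->].
  exists (fun i => B1 i `&` B2 i); first by move=> i; exact: measurableI.
  apply/seteqP; split=> x /=; first by move=> [h1 h2] i; split.
  by move=> h; split=> i; case: (h i).
- by [].
- by rewrite bigcup_const //; exists 0%N.
- by move=> A [B mB ->]; exact: m12.
- by [].
Qed.

Lemma perm_coord_map_measurable (s : {perm 'I_n}) (g : 'I_n -> T -> T) :
  (forall j, measurable_fun setT (g j)) -> measurable_fun setT (perm_coord_map s g).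
Proof.
move=> mg; apply/measurable_fun_tnthP => j.
have -> : (@tnth n T)^~ j \o perm_coord_map s g = g j \o (@tnth n T)^~ (s j).
  by apply/funext => z; rewrite /= tnth_mktuple.
exact: measurableT_comp (mg j) (measurable_tnth _).
Qed.

(* Both sides are fixed by their values on rectangles, and the preimage of a
   rectangle is a rectangle whose factors are permuted by s^-1. *)
Lemma iid_law_perm_coord_map_invariant (R : realType) (mu : set T -> \bar R)
    (P : probability (n.-tuple T) R) (s : {perm 'I_n}) (g : 'I_n -> T -> T) :
  iid_law mu P -> (forall j, measurable_fun setT (g j)) ->
  (forall j A, measurable A -> mu (g j @^-1` A) = mu A) ->
  forall A, measurable A -> P (perm_coord_map s g @^-1` A) = P A.
Proof.
move=> iidP mg gmu.
(* [mf] is the hypothesis that makes [pushforward P (perm_coord_map s g)] a measure. *)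
have mf := perm_coord_map_measurable s mg.
have mgB B j : measurable B -> measurable (g j @^-1` B).
  by move=> mB; rewrite -[X in measurable X]setTI; exact: mg.
apply: (@measure_rectangle_unique R (pushforward P (perm_coord_map s g)) P).
  change (P (perm_coord_map s g @^-1` setT) < +oo)%E.
  by rewrite preimage_setT probability_setT ltry.
move=> B mB; change (P (perm_coord_map s g @^-1` rectangle B) = P (rectangle B)).
have -> : perm_coord_map s g @^-1` rectangle B =
    rectangle (fun i => g (s^-1 i)%g @^-1` B (s^-1 i)%g).
  apply/seteqP; split => z /= Bz i.
    by have := Bz ((s^-1)%g i); rewrite tnth_mktuple permKV.
  by rewrite tnth_mktuple; have := Bz (s i); rewrite permK.
rewrite (iidP _ (fun i => mgB _ _ (mB _))) (iidP _ mB).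
under eq_bigr => i _ do rewrite gmu //.
by rewrite [RHS](reindex_inj (@perm_inj _ (s^-1)%g)).
Qed.

End Rectangles.
Section CenteredNormal.
Context (R : realType) (sigma : R).
Hypothesis sigma_neq0 : sigma != 0.

Lemma normal_pdf0N (x : R) : normal_pdf 0 sigma (- x) = normal_pdf 0 sigma x.
Proof. by rewrite /normal_pdf (negbTE sigma_neq0) /normal_fun !subr0 sqrrN. Qed.

Lemma normal_prob0N (A : set R) : measurable A ->
  normal_prob 0 sigma (-%R @^-1` A) = normal_prob 0 sigma A.
Proof.
move=> mA; rewrite /normal_prob.
transitivity (\int[lebesgue_measure]_(x in (-%R : R -> measurableTypeR R) @^-1` A)
   ((fun y => (normal_pdf 0 sigma y)%:E) \o (-%R : R -> measurableTypeR R)) x)%E.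
  by apply: eq_integral => x _ /=; rewrite normal_pdf0N.
rewrite -ge0_integral_pushforward //=.
- apply: eq_measure_integral => /= B mB _.
  exact: (@lebesgue_measureN R B mB).
- move=> _ Y mY; apply: measurableI => //.
  rewrite -[X in measurable X]setTI.
  exact: (proj2 (measurable_realfun.measurable_EFinP _ _)
    (measurable_normal_pdf 0 sigma) measurableT Y mY).
- by move=> y _; rewrite lee_fin normal_pdf_ge0.
Qed.

Lemma normal_prob0_sgnM (b : bool) (A : set R) : measurable A ->
  normal_prob 0 sigma ((fun x => sgn b * x) @^-1` A) = normal_prob 0 sigma A.
Proof.
move=> mA; case: b; rewrite /sgn; last first.
  by congr (normal_prob _ _ _); apply/seteqP; split=> x /=; rewrite mul1r.
rewrite -[RHS](normal_prob0N mA).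
by congr (normal_prob _ _ _); apply/seteqP; split=> x /=; rewrite mulN1r.
Qed.

End CenteredNormal.

Section Acceptance.
Context d (T : measurableType d) (R : realType).
Implicit Types (P Q : probability T R) (D : T -> R) (f : T -> T).

Lemma distinguisher_comp D f :
  measurable_fun setT f -> distinguisher D -> distinguisher (D \o f).
Proof. by move=> mf [mD D01]; split=> [|x]; [exact: measurableT_comp|exact: D01]. Qed.

Lemma distinguisher_integrable P D :
  distinguisher D -> P.-integrable setT (EFin \o D).
Proof.
move=> [mD D01]; apply: measurable_bounded_integrable => //.
  exact: (le_lt_trans (probability_le1 P measurableT) (ltry 1)).
exists 1; split => // M M1 x _ /=.
have /andP[D0 D1] := D01 x; rewrite ger0_norm //.
exact: le_trans D1 (ltW M1).
Qed.

Lemma accept_sum P (K : finType) (c : K -> R) (F : K -> T -> R) :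
  (forall k, distinguisher (F k)) ->
  accept P (fun x => \sum_k c k * F k x) = \sum_k c k * accept P (F k).
Proof.
move=> distF; rewrite /accept.
have intF k : P.-integrable setT (EFin \o F k) := distinguisher_integrable P (distF k).
have intcF k : P.-integrable setT (fun x => (c k * F k x)%:E).
  by apply: eq_integrable (integrableZl measurableT (c k) (intF k)) => // x _; rewrite EFinM.
have integralZ k : (\int[P]_x (c k * F k x)%:E)%E = (c k * Rintegral P setT (F k))%:E.
  rewrite /Rintegral EFinM fineK; last by apply: integrable_fin_num => //; exact: intF.
  rewrite -(integralZl measurableT (intF k)).
  by apply: eq_integral => x _; rewrite EFinM.
rewrite /Rintegral; under eq_integral do rewrite -sumEFin.
by rewrite integral_sum //; under eq_bigr do rewrite integralZ; rewrite sumEFin.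
Qed.

Lemma accept_comp_invariant P D f :
  measurable_fun setT f -> (forall A, measurable A -> P (f @^-1` A) = P A) ->
  distinguisher D -> accept P (D \o f) = accept P D.
Proof.
move=> mf Pf [mD D01]; rewrite /accept /Rintegral; congr fine.
transitivity (\int[pushforward P f]_(y in setT) (D y)%:E)%E.
  rewrite ge0_integral_pushforward //.
  - exact/measurable_realfun.measurable_EFinP.
  - by move=> y _; rewrite lee_fin; case/andP: (D01 y).
apply: eq_measure_integral => A mA _.
change (P (f @^-1` A) = P A); exact: Pf.
Qed.

Lemma accept_mixture_invariant P (K : finType) (mu : K -> R) (f : K -> T -> T) D :
  \sum_k mu k = 1 -> (forall k, measurable_fun setT (f k)) ->
  (forall k A, measurable A -> P (f k @^-1` A) = P A) -> distinguisher D ->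
  accept P (fun x => \sum_k mu k * D (f k x)) = accept P D.
Proof.
move=> mu1 mf Pf distD.
rewrite (accept_sum P mu (fun k => distinguisher_comp (mf k) distD)).
under eq_bigr do rewrite (accept_comp_invariant (mf _) (Pf _) distD).
by rewrite -mulr_suml mu1 mul1r.
Qed.

(* Averaging the keys inside the distinguisher costs nothing against the
   ideal law Q, because Q is invariant under every key. *)
Lemma mixture_advantage_reduce P Q (K : finType) (mu : K -> R) (f : K -> T -> T) D :
  \sum_k mu k = 1 -> (forall k, measurable_fun setT (f k)) ->
  (forall k A, measurable A -> Q (f k @^-1` A) = Q A) -> distinguisher D ->
  \sum_k mu k * accept P (fun x => D (f k x)) - accept Q D =
  accept P (fun x => \sum_k mu k * D (f k x)) -
  accept Q (fun x => \sum_k mu k * D (f k x)).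
Proof.
move=> mu1 mf Qf distD.
rewrite (accept_mixture_invariant mu1 mf Qf distD).
by rewrite (accept_sum P mu (fun k => distinguisher_comp (mf k) distD)).
Qed.

End Acceptance.

Lemma semFE (R : realType) L (k : sem_key L) :
  @semF R L k = perm_coord_map (k.2)^-1%g (fun j x => sgn (k.1 ((k.2)^-1%g j)) * x).
Proof. by []. Qed.

Lemma semF_tE (R : realType) L t (ks : {ffun 'I_t -> sem_key L}) :
  @semF_t R L t ks = perm_coord_map 1%g (fun i => semF (ks i)).
Proof. by apply/funext => zs; apply: eq_mktuple => i; rewrite perm1. Qed.

Lemma semF_measurable (R : realType) L (k : sem_key L) :
  measurable_fun setT (@semF R L k).
Proof.
rewrite semFE; apply: perm_coord_map_measurable => j.
exact: measurable_realfun.measurable_funM.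
Qed.

Lemma semF_t_measurable (R : realType) L t (ks : {ffun 'I_t -> sem_key L}) :
  measurable_fun setT (@semF_t R L t ks).
Proof. by rewrite semF_tE; apply: perm_coord_map_measurable => i; exact: semF_measurable. Qed.

Lemma std_gaussian_semF_invariant (R : realType) L (G : probability (L.-tuple R) R)
    (k : sem_key L) :
  std_gaussian G -> forall A, measurable A -> G (semF k @^-1` A) = G A.
Proof.
move=> gaussG; rewrite semFE.
apply: iid_law_perm_coord_map_invariant gaussG _ _ => j.
  exact: measurable_realfun.measurable_funM.
exact: normal_prob0_sgnM (oner_neq0 R) _.
Qed.

Lemma iid_std_gaussian_semF_t_invariant (R : realType) L t
    (G : probability (L.-tuple R) R) (PG : probability (t.-tuple (L.-tuple R)) R)
    (ks : {ffun 'I_t -> sem_key L}) :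
  std_gaussian G -> iid_law G PG ->
  forall A, measurable A -> PG (semF_t ks @^-1` A) = PG A.
Proof.
move=> gaussG iidPG; rewrite semF_tE.
apply: iid_law_perm_coord_map_invariant iidPG _ _ => i.
  exact: semF_measurable.
exact: std_gaussian_semF_invariant.
Qed.

Theorem theorem1 (R : realType) (L t : nat) (eps : R)
    (W : probability (L.-tuple R) R)
    (Adv1 : set (L.-tuple R -> R))
    (Advt : set (t.-tuple (L.-tuple R) -> R))
    (mu1 : sem_key L -> R) (mut : {ffun 'I_t -> sem_key L} -> R) :
  (1 <= L)%N -> (1 <= t)%N -> 0 <= eps ->
  (forall D, Adv1 D -> distinguisher D) ->
  (forall D, Advt D -> distinguisher D) ->
  fin_distr mu1 -> fin_distr mut ->
  (forall D, Adv1 D -> Adv1 (reduce1 mu1 D)) ->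
  (forall D, Advt D -> Advt (reducet mut D)) ->
  (single_undetectable W eps Adv1 -> single_undetectable_sem W mu1 eps Adv1) /\
  (multi_undetectable W eps Advt -> multi_undetectable_sem W mut eps Advt).
Proof.
move=> _ _ _ distAdv1 distAdvt [_ mu1_sum1] [_ mut_sum1] reduce1_Adv reducet_Adv; split.
- move=> undetW G gaussG D AdvD; rewrite /accept_sem1.
  rewrite (mixture_advantage_reduce W mu1_sum1 (@semF_measurable R L)
    (fun k => std_gaussian_semF_invariant k gaussG) (distAdv1 D AdvD)).
  exact: undetW G gaussG _ (reduce1_Adv _ AdvD).
- move=> undetW G PW PG gaussG iidPW iidPG D AdvD; rewrite /accept_semt.
  rewrite (mixture_advantage_reduce PW mut_sum1 (@semF_t_measurable R L t)
    (fun ks => iid_std_gaussian_semF_t_invariant ks gaussG iidPG) (distAdvt D AdvD)).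
  exact: undetW G PW PG gaussG iidPW iidPG _ (reducet_Adv _ AdvD).
Qed.
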